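(* Let $f=\sum_{i=1}^N \lambda_i f_i$ be convex and $L$-smooth in the sense below, let $w^*$ be a minimizer of $f$, and let $\eta>0$. Let $(w^t)_{t\ge 1}$ be generated by the asynchronous aggregation rule $$w^{t+1}=w^t-\eta\sum_{i\in\mathcal{I}_t}\lambda_i\nabla f_i\big(w^{t-\tau_i(t)}\big),$$ and define the asynchronous error $e(t)=\nabla f(w^t)-\sum_{i\in\mathcal{I}_t}\lambda_i\nabla f_i(w^{t-\tau_i(t)})$. Then for every $T\ge 1$, $$\sum_{t=1}^{T}\big[f(w^{t+1})-f(w^* )\big]\le \frac{1}{2\eta}\big(\|w^1-w^*\|^2-\|w^{T+1}-w^*\|^2\big)+\sum_{t=1}^{T}\langle e(t),w^{t+1}-w^*\rangle+\frac12\Big(L-\frac1\eta\Big)\sum_{t=1}^{T}\|w^{t+1}-w^t\|^2 .$$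
   Context: There are $N$ clients indexed by $i=1,\dots,N$, each with a differentiable local loss $f_i:\mathbb{R}^d\to\mathbb{R}$, and weights $\lambda_i\ge 0$ with $\sum_{i=1}^N\lambda_i=1$; the global loss is $f=\sum_{i=1}^N\lambda_i f_i$. Each $f_i$ satisfies, for all $w_1,w_2$: (smoothness) $f_i(w_1)-f_i(w_2)\le\langle\nabla f_i(w_2),w_1-w_2\rangle+\frac L2\|w_1-w_2\|^2$, and (convexity) $f_i(w_1)-f_i(w_2)\ge\langle\nabla f_i(w_2),w_1-w_2\rangle+\frac\mu2\|w_1-w_2\|^2$ with $\mu\ge 0$; hence $f$ satisfies the same two inequalities. $w^1$ is the initial parameter. For each iteration $t$, $\mathcal{I}_t\subseteq\{1,\dots,N\}$ is the set of clients that successfully send updates to the server at iteration $t$, and $\tau_i(t)$ is a nonnegative integer with $t-\tau_i(t)\ge 1$, the delay of client $i$ at iteration $t$ (so client $i$'s gradient used at iteration $t$ is computed at the global parameter $w^{t-\tau_i(t)}$ it received earlier). *)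

From HB Require Import structures.
From mathcomp Require Import all_boot all_order all_algebra.
From mathcomp Require Import all_classical all_reals all_analysis.
Set Implicit Arguments. Unset Strict Implicit. Unset Printing Implicit Defensive.
Import Order.TTheory GRing.Theory Num.Theory.
Local Open Scope ring_scope.
Local Open Scope classical_set_scope.
Import numFieldNormedType.Exports.

Definition dot {R : realType} {d : nat} (u v : 'rV[R]_d) : R := (u *m v^T) 0 0.
Definition sqnorm {R : realType} {d : nat} (u : 'rV[R]_d) : R := dot u u.

Definition is_gradient {R : realType} {d : nat}
  (f : 'rV[R]_d -> R) (g : 'rV[R]_d -> 'rV[R]_d) : Prop :=
  forall x v : 'rV[R]_d,
    (fun h : R => h^-1 * (f (x + h *: v) - f x)) @ 0^' --> dot (g x) v.

(** In each round, L-smoothness bounds f(w^{t+1}) - f(w^t) and convexity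
    bounds f(w^t) - min f, both through the exact gradient at w^t.  Writing
    that gradient as the applied update (w^t - w^{t+1})/eta plus the
    asynchronous error e(t), the update term paired with w^{t+1} minus the
    minimizer becomes, by the three-point identity, a difference of squared
    distances to the minimizer, which telescopes over t = 1, ..., T. *)
From HB Require Import structures.
From mathcomp Require Import all_boot all_order all_algebra.
From mathcomp Require Import all_classical all_reals all_analysis.
From mathcomp Require Import lra.
Set Implicit Arguments. Unset Strict Implicit. Unset Printing Implicit Defensive.
Import Order.TTheory GRing.Theory Num.Theory.
Local Open Scope ring_scope.

Section Dot.
Variables (R : realType) (d : nat).
Implicit Types (u v x : 'rV[R]_d).

Lemma dotDl u v x : dot (u + v) x = dot u x + dot v x.
Proof. by rewrite /dot mulmxDl mxE. Qed.

Lemma dotZl (a : R) u v : dot (a *: u) v = a * dot u v.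
Proof. by rewrite /dot -scalemxAl mxE. Qed.

Lemma dotNl u v : dot (- u) v = - dot u v.
Proof. by rewrite -scaleN1r dotZl mulN1r. Qed.

Lemma dotBl u v x : dot (u - v) x = dot u x - dot v x.
Proof. by rewrite dotDl dotNl. Qed.

Lemma dotC u v : dot u v = dot v u.
Proof. by rewrite /dot -[u *m _]trmxK trmx_mul trmxK mxE. Qed.

Lemma dotBr u v x : dot x (u - v) = dot x u - dot x v.
Proof. by rewrite dotC dotBl !(dotC x). Qed.

Lemma dot_suml (I : Type) (r : seq I) (P : pred I) (F : I -> 'rV[R]_d) v :
  dot (\sum_(i <- r | P i) F i) v = \sum_(i <- r | P i) dot (F i) v.
Proof. by rewrite /dot mulmx_suml summxE. Qed.

Lemma sqnorm_ge0 u : 0 <= sqnorm u.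
Proof.
rewrite /sqnorm /dot mxE; apply: sumr_ge0 => j _.
by rewrite mxE -expr2 sqr_ge0.
Qed.

Lemma dot_three_point x y z :
  2 * dot (x - y) (y - z) = sqnorm (x - z) - sqnorm (y - z) - sqnorm (y - x).
Proof. rewrite /sqnorm !(dotBl, dotBr) (dotC y x) (dotC z x) (dotC z y); lra. Qed.

End Dot.

Section SmoothConvex.
Variables (R : realType) (d : nat).
Implicit Types (F : 'rV[R]_d -> R) (G : 'rV[R]_d -> 'rV[R]_d) (L mu : R).

Definition gradient_smooth L F G :=
  forall u v, F u - F v <= dot (G v) (u - v) + L / 2 * sqnorm (u - v).

Definition gradient_strongly_convex mu F G :=
  forall u v, dot (G v) (u - v) + mu / 2 * sqnorm (u - v) <= F u - F v.

Definition gradient_convex F G := forall u v, dot (G v) (u - v) <= F u - F v.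

Lemma strongly_convex_convex mu F G :
  0 <= mu -> gradient_strongly_convex mu F G -> gradient_convex F G.
Proof.
move=> mu_ge0 Fmu u v; apply: le_trans (Fmu u v).
by rewrite lerDl mulr_ge0 ?divr_ge0 ?sqnorm_ge0.
Qed.

Section Combination.
Variables (I : finType) (lambda : I -> R) (f : I -> 'rV[R]_d -> R).
Variables (g : I -> 'rV[R]_d -> 'rV[R]_d).
Hypothesis lambda_ge0 : forall i, 0 <= lambda i.

Let Fsum v := \sum_i lambda i * f i v.
Let Gsum v := \sum_i lambda i *: g i v.

Lemma dot_combination v u : dot (Gsum v) u = \sum_i lambda i * dot (g i v) u.
Proof. by rewrite dot_suml; apply: eq_bigr => i _; rewrite dotZl. Qed.

Lemma combination_smooth L :
  \sum_i lambda i = 1 ->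
  (forall i, gradient_smooth L (f i) (g i)) -> gradient_smooth L Fsum Gsum.
Proof.
move=> lambda_sum1 f_smooth u v.
have -> : L / 2 * sqnorm (u - v) = \sum_i lambda i * (L / 2 * sqnorm (u - v)).
  by rewrite -mulr_suml lambda_sum1 mul1r.
rewrite -sumrB dot_combination -big_split /= ler_sum // => i _.
by rewrite -mulrBr -mulrDr ler_wpM2l ?f_smooth.
Qed.

Lemma combination_convex :
  (forall i, gradient_convex (f i) (g i)) -> gradient_convex Fsum Gsum.
Proof.
move=> f_convex u v; rewrite -sumrB dot_combination ler_sum // => i _.
by rewrite -mulrBr ler_wpM2l ?f_convex.
Qed.

End Combination.

Lemma descent_step L F G eta x y z S :
  gradient_smooth L F G -> gradient_convex F G -> 0 < eta ->
  y = x - eta *: S ->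
  F y - F z <= (2 * eta)^-1 * (sqnorm (x - z) - sqnorm (y - z))
               + dot (G x - S) (y - z) + 2^-1 * (L - eta^-1) * sqnorm (y - x).
Proof.
move=> F_smooth F_convex eta_gt0 y_def.
have S_def : S = eta^-1 *: (x - y).
  by rewrite y_def opprB addrC subrK scalerA mulVf ?gt_eqF // scale1r.
have S_dot : dot S (y - z) =
    (2 * eta)^-1 * (sqnorm (x - z) - sqnorm (y - z) - sqnorm (y - x)).
  by rewrite S_def dotZl -dot_three_point invfM mulrCA !mulrA mulfV ?pnatr_eq0 ?mul1r.
have G_split : dot (G x - S) (y - z) = dot (G x) (y - x) - dot (G x) (z - x) - dot S (y - z).
  by rewrite dotBl !dotBr; lra.
have := F_smooth y x; have := F_convex z x.
rewrite G_split S_dot invfM; lra.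
Qed.

End SmoothConvex.

Theorem lemma1 (R : realType) (d N : nat)
  (f : 'I_N -> 'rV[R]_d -> R) (g : 'I_N -> 'rV[R]_d -> 'rV[R]_d)
  (lambda : 'I_N -> R) (L mu eta : R)
  (I : nat -> {set 'I_N}) (tau : 'I_N -> nat -> nat)
  (w : nat -> 'rV[R]_d) (wstar : 'rV[R]_d) (T : nat) :
  (forall i, is_gradient (f i) (g i)) ->
  (forall i, 0 <= lambda i) -> \sum_(i < N) lambda i = 1 ->
  (forall i w1 w2, f i w1 - f i w2 <= dot (g i w2) (w1 - w2) + L / 2 * sqnorm (w1 - w2)) ->
  0 <= mu ->
  (forall i w1 w2, f i w1 - f i w2 >= dot (g i w2) (w1 - w2) + mu / 2 * sqnorm (w1 - w2)) ->
  (forall v, \sum_(i < N) lambda i * f i wstar <= \sum_(i < N) lambda i * f i v) ->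
  0 < eta ->
  (forall i t, (1 <= t)%N -> (1 <= t - tau i t)%N) ->
  (forall t, (1 <= t)%N ->
     w t.+1 = w t - eta *: \sum_(i in I t) lambda i *: g i (w (t - tau i t)%N)) ->
  (1 <= T)%N ->
  let F := fun v => \sum_(i < N) lambda i * f i v in
  let gradF := fun v => \sum_(i < N) lambda i *: g i v in
  let e := fun t : nat => gradF (w t) - \sum_(i in I t) lambda i *: g i (w (t - tau i t)%N) in
  \sum_(1 <= t < T.+1) (F (w t.+1) - F wstar)
  <= (2 * eta)^-1 * (sqnorm (w 1%N - wstar) - sqnorm (w T.+1 - wstar))
     + \sum_(1 <= t < T.+1) dot (e t) (w t.+1 - wstar)
     + 2^-1 * (L - eta^-1) * \sum_(1 <= t < T.+1) sqnorm (w t.+1 - w t).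
Proof.
(* The bound holds for any reference point [wstar]. *)
move=> _ lambda_ge0 lambda_sum1 f_smooth mu_ge0 f_strong _ eta_gt0 _ w_next _ /=.
pose F v := \sum_(i < N) lambda i * f i v.
pose gradF v := \sum_(i < N) lambda i *: g i v.
have F_smooth : gradient_smooth L F gradF :=
  combination_smooth lambda_ge0 lambda_sum1 f_smooth.
have F_convex : gradient_convex F gradF :=
  combination_convex lambda_ge0 (fun i => strongly_convex_convex mu_ge0 (f_strong i)).
have telescoped : \sum_(1 <= t < T.+1) (sqnorm (w t - wstar) - sqnorm (w t.+1 - wstar))
    = sqnorm (w 1%N - wstar) - sqnorm (w T.+1 - wstar).
  rewrite -opprB -(telescope_sumr (fun t => sqnorm (w t - wstar))) // -sumrN.
  by apply: eq_bigr => t _; rewrite opprB.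
apply: le_trans (ler_sum_nat (fun t t_ge1 =>
  descent_step wstar F_smooth F_convex eta_gt0 (w_next t (proj1 (andP t_ge1))))) _.
by rewrite !big_split /= -!mulr_sumr telescoped.
Qed.
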